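(* Let $V=\mathbb{F}_2^s$ and let $\circ$ and $\diamond$ be two alternative operations on $V$ with $\dim W_\circ=\dim W_\diamond=s-3$. Then the groups $H_\circ$ and $H_\diamond$ are conjugate by some $g\in\mathrm{GL}(V)$ if and only if $\dim U_\circ=\dim U_\diamond$.
   Context: An alternative operation on $V$ is defined from an elementary abelian $2$-subgroup $T<\mathrm{AGL}(V,+)$ acting regularly on $V$: with $\tau_a$ the unique element of $T$ sending $0$ to $a$ (postfix notation), $a\circ b:=a\tau_b$. It is assumed that the xor-translations lie in $\mathrm{AGL}(V,\circ)$, the normaliser of $T$ in $\mathrm{Sym}(V)$; $\mathrm{GL}(V,\circ)$ is the stabiliser of $0$ in $\mathrm{AGL}(V,\circ)$ and $H_\circ:=\mathrm{GL}(V,+)\cap\mathrm{GL}(V,\circ)$. The weak key space is $W_\circ=\{k: x\circ k=x+k\ \forall x\}$; the product is $a\cdot b=a+b+a\circ b$ and the error space is $U_\circ=\{a\cdot b: a,b\in V\}$. Conjugation by $g$ means $G\mapsto gGg^{-1}$. *)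

From HB Require Import structures.
From mathcomp Require Import all_boot all_order all_algebra all_fingroup all_solvable.
Set Implicit Arguments. Unset Strict Implicit. Unset Printing Implicit Defensive.
Import GRing.Theory.

Definition V (s : nat) := 'rV['F_2]_s.

Local Open Scope ring_scope.

Definition AGLp (s : nat) : {set {perm V s}} :=
  [set f : {perm V s} | [exists A : 'M['F_2]_s, exists b : V s,
     (A \in unitmx) && [forall x : V s, f x == x *m A + b]]].

Definition GLp (s : nat) : {set {perm V s}} :=
  [set f : {perm V s} | [exists A : 'M['F_2]_s,
     (A \in unitmx) && [forall x : V s, f x == x *m A]]].

Definition regular (s : nat) (T : {set {perm V s}}) : Prop :=
  forall x y : V s, exists! t : {perm V s}, t \in T /\ t x = y.

(* T defines an alternative operation: elementary abelian 2-subgroup of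
   AGL(V,+), regular on V, whose normaliser in Sym(V) contains all
   xor-translations x |-> x + a. *)
Definition alt_op (s : nat) (T : {group {perm V s}}) : Prop :=
  [/\ (2.-abelem T)%g, T \subset AGLp s, regular T &
      forall a : V s, exists2 n : {perm V s}, n \in 'N(T)%g & forall x, n x = x + a].

Definition tau (s : nat) (T : {set {perm V s}}) (a : V s) : {perm V s} :=
  odflt 1%g [pick t in T | t 0 == a].

Definition circ (s : nat) (T : {set {perm V s}}) (a b : V s) : V s := tau T b a.

(* AGL(V,o) = 'N(T);  GL(V,o) = stabiliser of 0 in AGL(V,o) *)
Definition GLcirc (s : nat) (T : {set {perm V s}}) : {set {perm V s}} :=
  [set f in 'N(T)%g | f 0 == 0].

Definition Hcirc (s : nat) (T : {set {perm V s}}) : {set {perm V s}} :=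
  GLp s :&: GLcirc T.

Definition Wcirc (s : nat) (T : {set {perm V s}}) : {set V s} :=
  [set k : V s | [forall x : V s, circ T x k == x + k]].

Definition dotp (s : nat) (T : {set {perm V s}}) (a b : V s) : V s :=
  a + b + circ T a b.

Definition Wsp (s : nat) (T : {set {perm V s}}) : {vspace V s} :=
  <<enum (Wcirc T)>>%VS.

Definition Usp (s : nat) (T : {set {perm V s}}) : {vspace V s} :=
  <<[seq dotp T a b | a <- enum [set: V s], b <- enum [set: V s]]>>%VS.

From HB Require Import structures.
From mathcomp Require Import all_boot all_order all_algebra all_fingroup all_solvable.
From mathcomp Require Import ring zify.
Set Implicit Arguments. Unset Strict Implicit. Unset Printing Implicit Defensive.
Import GRing.Theory.
Local Open Scope ring_scope.

(* The product a.b = a + b + a o b is biadditive, alternating and takes its values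
   in its own radical W = W_o, and H_o is the group of linear automorphisms of this
   product, while U_o is the span of its image.  When dim V/W = 3, the product factors
   through the alternating square of V/W, which has dimension 3; as its radical is
   exactly W, the image U has dimension 3 or 2.  In a basis of V adapted to V/W, to U
   and to a complement of U in W, the product takes one of two normal forms that only
   depend on dim U, so equal dimensions give conjugate groups.  Conversely, H_o
   stabilises the plane U when dim U = 2, whereas in the normal form with dim U = 3
   transvections along the radical and lifts of elementary maps of V/W leave no plane
   invariant. *)

Lemma F2_natr n : (n%:R : 'F_2) = (odd n)%:R.
Proof. by elim: n => // n IH; rewrite -[n.+1]addn1 natrD IH oddD; case: (odd n); apply/eqP. Qed.

Lemma F2P (c : 'F_2) : c = 0 \/ c = 1.
Proof. by case: c => [[|[|]]] //= lt_c2; [left | right]; apply/val_inj. Qed.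

(* [ring: e1 .. en] only uses the [ei] to rewrite coefficients of the normal
   form, so every numeral that may occur as a coefficient is reduced separately. *)
Ltac f2 := match goal with |- @eq _ ?a ?b => change (@eq 'F_2 a b) end;
  ring: (F2_natr 2 : _ = 0) (F2_natr 3 : _ = 1) (F2_natr 4 : _ = 0)
        (F2_natr 5 : _ = 1) (F2_natr 6 : _ = 0) (F2_natr 7 : _ = 1) (F2_natr 8 : _ = 0).
Ltac f2_vec := apply/rowP => ?; rewrite !mxE; f2.

Section Additive.
Variable s : nat.
Implicit Types (x y : V s) (f : V s -> V s).

Lemma addvv x : x + x = 0.
Proof. by rewrite -mulr2n -scaler_nat F2_natr scale0r. Qed.

Lemma addvK x y : x + y + y = x.
Proof. by rewrite -addrA addvv addr0. Qed.

Lemma additive0 f : {morph f : x y / x + y} -> f 0 = 0.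
Proof. by move=> fD; apply: (addrI (f 0)); rewrite -fD !addr0. Qed.

Lemma additiveZ f c x : {morph f : x y / x + y} -> f (c *: x) = c *: f x.
Proof. by move=> fD; case: (F2P c) => ->; rewrite ?scale0r ?scale1r ?additive0. Qed.

Lemma additive_sum f (I : Type) (r : seq I) (P : pred I) (F : I -> V s) :
  {morph f : x y / x + y} -> f (\sum_(i <- r | P i) F i) = \sum_(i <- r | P i) f (F i).
Proof. by move=> fD; apply: (big_morph f fD (additive0 fD)). Qed.

Lemma additive_perm_inv (g : {perm V s}) :
  {morph g : x y / x + y} -> {morph (g^-1)%g : x y / x + y}.
Proof. by move=> gD x y; apply: (@perm_inj _ g); rewrite gD !permKV. Qed.

Lemma additive_permM (g h : {perm V s}) :
  {morph g : x y / x + y} -> {morph h : x y / x + y} -> {morph (g * h)%g : x y / x + y}.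
Proof. by move=> gD hD x y; rewrite !permM gD hD. Qed.

Lemma GLpE (g : {perm V s}) : g \in GLp s <-> {morph g : x y / x + y}.
Proof.
split=> [|gD].
  rewrite inE => /existsP[A /andP[_ /forallP gA]] x y.
  by rewrite (eqP (gA (x + y))) (eqP (gA x)) (eqP (gA y)) mulmxDl.
pose A : 'M['F_2]_s := \matrix_(i, j) g (delta_mx 0 i) 0 j.
have gA x : x *m A = g x.
  rewrite mulmx_sum_row {2}(row_sum_delta x) (additive_sum _ _ _ gD).
  apply: eq_bigr => i _; rewrite (additiveZ _ _ gD); congr (_ *: _).
  by apply/rowP => j; rewrite !mxE.
rewrite inE; apply/existsP; exists A; apply/andP; split.
  rewrite -row_free_unit; apply: inj_row_free => v; rewrite gA => gv0.
  by apply: (@perm_inj _ g); rewrite gv0 additive0.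
by apply/forallP => x; rewrite gA.
Qed.

End Additive.

(* The groups and spaces of the statement, attached to any map [B] in place of
   the product [a.b]: automorphisms of [B], span of its radical, span of its image. *)
Definition HB s (B : V s -> V s -> V s) : {set {perm V s}} :=
  GLp s :&: [set g : {perm V s} | [forall a, forall b, g (B a b) == B (g a) (g b)]].
Definition WB s (B : V s -> V s -> V s) : {vspace V s} :=
  <<enum [set k : V s | [forall x, B x k == 0%R]]>>%VS.
Definition UB s (B : V s -> V s -> V s) : {vspace V s} :=
  <<[seq B a b | a <- enum [set: V s], b <- enum [set: V s]]>>%VS.

Lemma HBP s (B : V s -> V s -> V s) (g : {perm V s}) :
  g \in HB B <-> {morph g : x y / x + y} /\ forall a b, g (B a b) = B (g a) (g b).
Proof.
rewrite in_setI [X in _ && X]inE.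
split=> [/andP[gGL /forallP gB] | [gD gB]].
  by split=> [|a b]; [exact/(GLpE g) | apply/eqP/(forallP (gB a))].
apply/andP; split; first exact/GLpE.
by apply/forallP => a; apply/forallP => b; rewrite gB.
Qed.

Section AltOp.
Variables (s : nat) (T : {group {perm V s}}).
Hypothesis altT : alt_op T.
Local Notation D := (dotp T).
Implicit Types (x y z a b : V s).

Lemma tauP a : tau T a \in T /\ tau T a 0 = a.
Proof.
rewrite /tau; case: pickP => [t /andP[tT /eqP ->] //|noT].
case: altT => _ _ regT _; have [t [[tT t0a] _]] := regT 0 a.
by move: (noT t); rewrite tT t0a eqxx.
Qed.

Lemma tau_uniq t : t \in T -> tau T (t 0) = t.
Proof.
move=> tT; case: altT => _ _ regT _; have [t' [_ uniq_t']] := regT 0 (t 0).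
by rewrite -(uniq_t' _ (tauP (t 0))) -(uniq_t' _ (conj tT erefl)).
Qed.

Lemma tauE x b : tau T b x = x + b + D x b.
Proof. by rewrite /dotp /circ; f2_vec. Qed.

Lemma dotp_addl b : {morph D ^~ b : x y / x + y}.
Proof.
case: altT => _ /subsetP affT _ _; have [/affT + tb0] := tauP b.
rewrite inE => /existsP[M /existsP[c /andP[_ /forallP tbM]]].
have {}tbM x : tau T b x = x *m M + b.
  by rewrite (eqP (tbM x)); congr (_ + _); move: (eqP (tbM 0)); rewrite tb0 mul0mx add0r.
have DM x : D x b = x + x *m M by rewrite /dotp /circ tbM addrACA addvv addr0.
by move=> x y; rewrite !DM mulmxDl addrACA.
Qed.

Lemma dotpC a b : D a b = D b a.
Proof.
case: altT => /(abelemP (isT : prime 2))[abT _] _ _ _.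
have [ta _] := tauP a; have [tb _] := tauP b.
have /(congr1 (fun p : {perm V s} => p 0)) := (centsP abT) _ ta _ tb.
by rewrite !permM !(proj2 (tauP _)) /dotp /circ (addrC a b) => ->.
Qed.

Lemma dotpxx a : D a a = 0.
Proof.
case: altT => /(abelemP (isT : prime 2))[_ expT] _ _ _.
have [ta ta0] := tauP a.
have /(congr1 (fun p : {perm V s} => p 0)) := expT _ ta.
by rewrite expgS expg1 permM perm1 ta0 /dotp /circ => ->; rewrite addvv add0r.
Qed.

Lemma dotp_addr a : {morph D a : x y / x + y}.
Proof. by move=> x y; rewrite dotpC dotp_addl !(dotpC a). Qed.

(* Conjugating tau_b by the xor-translation by a gives tau_(b + D a b). *)
Lemma dotp_dotp x a b : D x (D a b) = 0.
Proof.
case: altT => _ _ _ /(_ a)[n nT nE].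
have nVE y : (n^-1)%g y = y + a.
  by apply: (@perm_inj _ n); rewrite permKV nE -addrA addvv addr0.
have [tb _] := tauP b.
have tbJ : tau T (b + D a b) = (tau T b ^ n)%g.
  have tbJT : (tau T b ^ n)%g \in T by rewrite memJ_norm.
  by rewrite -(tau_uniq tbJT) conjgE !permM nVE add0r nE tauE; congr (tau T _); f2_vec.
have /(congr1 (fun p : {perm V s} => p x)) := tbJ.
rewrite conjgE !permM nVE nE !tauE (dotp_addr x b) dotp_addl.
set r := D a b; set t := D x r; set p := D x b => E.
have L : x + (b + r) + (p + t) = (x + b + r + p) + t by f2_vec.
have R : x + a + b + (p + r) + a = (x + b + r + p) + 0 by f2_vec.
by apply: (addrI (x + b + r + p)); rewrite -L E R.
Qed.

Lemma tauJ_dotp (g : {perm V s}) b : {morph g : x y / x + y} ->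
  (tau T b ^ g)%g = tau T (g b) <-> forall z, g (D z b) = D (g z) (g b).
Proof.
move=> gD; have tauJE z : (tau T b ^ g)%g (g z) = g (z + b + D z b).
  by rewrite conjgE !permM permK tauE.
split=> [tbJ z | gDb].
  by have := tauJE z; rewrite tbJ tauE 2!gD => /addrI ->.
by apply/permP => y; rewrite -(permKV g y) tauJE tauE 2!gD gDb.
Qed.

Lemma Hcirc_dotp : Hcirc T = HB D.
Proof.
apply/setP => g; rewrite !in_setI; apply/andb_id2l => gGL.
have gD := (GLpE g).1 gGL.
rewrite !inE (additive0 gD) eqxx andbT; apply/idP/forallP => [gN a | gDb].
  apply/forallP => b; apply/eqP.
  have tbJT : (tau T b ^ g)%g \in T by rewrite memJ_norm ?inE // (tauP b).1.
  have tbJ : (tau T b ^ g)%g = tau T (g b).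
    by rewrite -(tau_uniq tbJT) conjgE !permM (additive0 (additive_perm_inv gD)) (tauP b).2.
  exact: (tauJ_dotp b gD).1 tbJ a.
apply/subsetP => _ /imsetP[t tT ->]; rewrite -(tau_uniq tT).
rewrite (proj2 (tauJ_dotp _ gD)); first exact: (tauP _).1.
by move=> z; apply/eqP/(forallP (gDb z)).
Qed.

Lemma Wsp_dotp : Wsp T = WB D.
Proof.
rewrite /Wsp /WB; suff -> : Wcirc T = [set k | [forall x, D x k == 0]] by [].
apply/setP => k; rewrite !inE; apply/eq_forallb => x; rewrite /dotp.
apply/eqP/eqP => [-> | Dxk]; first by rewrite addvv.
move/rowP: Dxk => Dxk; apply/rowP => j; move: (Dxk j); rewrite !mxE => Dxkj.
by rewrite -[LHS]addr0 -Dxkj; f2.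
Qed.

End AltOp.

Section Planes.
Variable s : nat.
Implicit Types (a b x y z : V s) (H : {set {perm V s}}).

Definition in_plane a b z := z = 0 \/ z = a \/ z = b \/ z = a + b.

Definition stab_plane H := exists a b,
  [/\ a != 0, b != 0, a != b & forall h, h \in H -> in_plane a b (h a) /\ in_plane a b (h b)].

Lemma in_plane_add a b y z : in_plane a b y -> in_plane a b z -> in_plane a b (y + z).
Proof.
rewrite /in_plane => Py Pz.
by case: Py => [->|[->|[->|->]]]; case: Pz => [->|[->|[->|->]]];
  first [ left; f2_vec | right; left; f2_vec
        | right; right; left; f2_vec | right; right; right; f2_vec ].
Qed.

Lemma in_plane_span a b z : z \in <<[:: a; b]>>%VS -> in_plane a b z.
Proof.
rewrite span_cons span_seq1 => /memv_addP[_ /vlineP[c ->] [_ /vlineP[d ->] ->]].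
by case: (F2P c) => ->; case: (F2P d) => ->; rewrite ?scale0r ?scale1r ?addr0 ?add0r;
  rewrite /in_plane; tauto.
Qed.

Lemma in_plane_morph a b z (f : V s -> V s) : {morph f : x y / x + y} ->
  in_plane a b z -> in_plane (f a) (f b) (f z).
Proof.
move=> fD [->|[->|[->|->]]]; rewrite /in_plane ?fD; tauto || (left; exact: additive0).
Qed.

Lemma in_plane3 a b x y z : in_plane a b x -> in_plane a b y -> in_plane a b z ->
  x != 0 -> y != 0 -> z != 0 -> x != y -> x != z -> y != z -> z = x + y.
Proof.
rewrite /in_plane.
by case=> [->|[->|[->|->]]]; case=> [->|[->|[->|->]]]; case=> [->|[->|[->|->]]];
  rewrite ?eqxx //= => *; f2_vec.
Qed.

Lemma stab_planeJ H (q : {perm V s}) :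
  {morph q : x y / x + y} -> stab_plane H -> stab_plane (H :^ q)%g.
Proof.
move=> qD [a [b [a0 b0 ab Hab]]]; exists (q a), (q b); split.
- by apply: contra a0 => /eqP qa0; apply/eqP/(@perm_inj _ q); rewrite qa0 additive0.
- by apply: contra b0 => /eqP qb0; apply/eqP/(@perm_inj _ q); rewrite qb0 additive0.
- by apply: contra ab => /eqP/perm_inj ->.
move=> h; rewrite mem_conjg => /Hab[ha hb].
have hqE z : h (q z) = q ((h ^ q^-1)%g z) by rewrite conjgE invgK !permM permKV.
by rewrite !hqE; split; apply: in_plane_morph.
Qed.

Lemma stab_planeJE H (q : {perm V s}) : {morph q : x y / x + y} ->
  stab_plane (H :^ q)%g <-> stab_plane H.
Proof.
move=> qD; split; last exact: stab_planeJ.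
by move=> /(stab_planeJ (additive_perm_inv qD)); rewrite -conjsgM mulgV conjsg1.
Qed.

End Planes.

Lemma additive_span s (f : V s -> V s) (X : seq (V s)) (Y : {vspace V s}) :
  {morph f : x y / x + y} -> {in X, forall x, f x \in Y} -> forall v, v \in <<X>>%VS -> f v \in Y.
Proof.
move=> fD fXY v /(@coord_span _ _ _ (in_tuple X)) ->.
rewrite (additive_sum _ _ _ fD) memv_suml // => i _.
by rewrite (additiveZ _ _ fD) memvZ // fXY // mem_nth.
Qed.

Definition nil_alt s (B : V s -> V s -> V s) : Prop :=
  [/\ forall y, {morph B ^~ y : x z / x + z}, forall x y, B x y = B y x,
      forall x, B x x = 0 & forall x y z, B x (B y z) = 0].

Lemma dotp_nil_alt s (T : {group {perm V s}}) : alt_op T -> nil_alt (dotp T).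
Proof.
by move=> altT; split; [exact: dotp_addl | exact: dotpC | exact: dotpxx | exact: dotp_dotp].
Qed.

Section NilAlt.
Variables (s : nat) (B : V s -> V s -> V s).
Hypothesis nB : nil_alt B.
Implicit Types (x y z u v w : V s).

Lemma B_addl y : {morph B ^~ y : x z / x + z}. Proof. by case: nB. Qed.
Lemma BC x y : B x y = B y x. Proof. by case: nB. Qed.
Lemma Bxx x : B x x = 0. Proof. by case: nB. Qed.
Lemma B_addr x : {morph B x : y z / y + z}.
Proof. by move=> y z; rewrite BC B_addl !(BC _ x). Qed.
Lemma BZl c x y : B (c *: x) y = c *: B x y. Proof. exact: (additiveZ _ _ (B_addl y)). Qed.
Lemma BZr c x y : B x (c *: y) = c *: B x y. Proof. exact: (additiveZ _ _ (B_addr x)). Qed.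

Lemma B_comb3 (f0 f1 f2 : V s) (a0 a1 a2 b0 b1 b2 : 'F_2) :
  B (a0 *: f0 + a1 *: f1 + a2 *: f2) (b0 *: f0 + b1 *: f1 + b2 *: f2) =
  (a0 * b1 + a1 * b0) *: B f0 f1 + (a0 * b2 + a2 * b0) *: B f0 f2
  + (a1 * b2 + a2 * b1) *: B f1 f2.
Proof.
rewrite !B_addl !BZl !B_addr !BZr !Bxx (BC f1 f0) (BC f2 f0) (BC f2 f1).
move: (B f0 f1) (B f0 f2) (B f1 f2) => u01 u02 u12.
rewrite !scaler0 !add0r !addr0 !scalerDr !scalerA !scalerDl !addrA.
by rewrite (ACl (1*3*2*5*4*6)).
Qed.

Definition is_rad v := forall x, B x v = 0.

Lemma is_radB x y : is_rad (B x y). Proof. by case: nB => _ _ _ BB z; rewrite BB. Qed.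
Lemma rad_Bl v x : is_rad v -> B v x = 0. Proof. by move=> rv; rewrite BC rv. Qed.

Lemma memWB v : v \in WB B <-> is_rad v.
Proof.
split=> [vW x | rv]; last first.
  by apply: memv_span; rewrite mem_enum inE; apply/forallP => x; rewrite rv.
apply/eqP; rewrite -memv0; apply: (additive_span (B_addr x)) vW => u.
by rewrite mem_enum inE memv0 => /forallP/(_ x).
Qed.

Lemma memUB x y : B x y \in UB B.
Proof. by apply: memv_span; apply: allpairs_f; rewrite mem_enum inE. Qed.

Lemma UB_sub_WB : (UB B <= WB B)%VS.
Proof. by apply/span_subvP => _ /allpairsP[[x y] [_ _ ->]]; apply/memWB/is_radB. Qed.

Lemma HB_UB g u : g \in HB B -> u \in UB B -> g u \in UB B.
Proof.
move=> /HBP[gD gB]; apply: (additive_span gD) => _ /allpairsP[[x y] [_ _ ->]].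
by rewrite /= gB memUB.
Qed.

Lemma stab_plane_UB2 : \dim (UB B) = 2%N -> stab_plane (HB B).
Proof.
move=> dimU; have := vbasisP (UB B); have : size (vbasis (UB B)) = 2%N by rewrite size_tuple.
case: (tval _) => [|a [|b []]] //= _ /andP[/eqP spanU].
rewrite free_cons seq1_free => /andP[a_notin_b b0].
have [a0 ab] : a != 0 /\ a != b.
  by split; apply: contraNneq a_notin_b => ->; rewrite ?mem0v ?memv_span ?mem_head.
exists a, b; split => // h hH; split; apply: in_plane_span; rewrite spanU;
  by apply: HB_UB hH _; rewrite -spanU memv_span // !inE eqxx ?orbT.
Qed.

End NilAlt.

Lemma dimV s : \dim {:V s} = s.
Proof. by rewrite dimvf /dim /= mul1n. Qed.

Lemma memv_span3 s (f0 f1 f2 : V s) : [/\ f0 \in <<[:: f0; f1; f2]>>%VS,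
  f1 \in <<[:: f0; f1; f2]>>%VS & f2 \in <<[:: f0; f1; f2]>>%VS].
Proof. by split; apply: memv_span; rewrite !inE eqxx ?orbT. Qed.

Lemma memv_comb3 s (f0 f1 f2 : V s) c0 c1 c2 :
  c0 *: f0 + c1 *: f1 + c2 *: f2 \in <<[:: f0; f1; f2]>>%VS.
Proof. by have [? ? ?] := memv_span3 f0 f1 f2; rewrite !memvD ?memvZ. Qed.

Lemma span3P s (f0 f1 f2 v : V s) : v \in <<[:: f0; f1; f2]>>%VS ->
  exists c0 c1 c2, v = c0 *: f0 + c1 *: f1 + c2 *: f2.
Proof.
rewrite !span_cons span_nil addv0.
move=> /memv_addP[_ /vlineP[c0 ->] [_ /memv_addP[_ /vlineP[c1 ->] [_ /vlineP[c2 ->] ->]] ->]].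
by exists c0, c1, c2; rewrite addrA.
Qed.

Lemma free3 s (f0 f1 f2 : V s) c0 c1 c2 : free [:: f0; f1; f2] ->
  c0 *: f0 + c1 *: f1 + c2 *: f2 = 0 -> [/\ c0 = 0, c1 = 0 & c2 = 0].
Proof.
move=> /(@freeP _ _ 3 [tuple f0; f1; f2]) freeF comb0.
pose k (i : 'I_3) := [:: c0; c1; c2]`_i.
have sum0 : \sum_(i < 3) k i *: [tuple f0; f1; f2]`_i = 0.
  by rewrite !big_ord_recl big_ord0 /= addr0 addrA.
by split; [exact: (freeF k sum0 0) | exact: (freeF k sum0 1) | exact: (freeF k sum0 2)].
Qed.

Section Coordinates.
Variable n : nat.
Implicit Types (x y v w : V n.+1).

Definition cx x (k : nat) : 'F_2 := x 0 (inord k).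
Definition ev (k : nat) : V n.+1 := \row_(j < n.+1) (val j == k)%:R.

Lemma cxD x y k : cx (x + y) k = cx x k + cx y k. Proof. by rewrite /cx mxE. Qed.
Lemma cxZ c x k : cx (c *: x) k = c * cx x k. Proof. by rewrite /cx mxE. Qed.
Lemma cx0 k : cx 0 k = 0. Proof. by rewrite /cx mxE. Qed.
Lemma cx_ev k l : (l < n.+1)%N -> cx (ev k) l = (l == k)%:R.
Proof. by move=> ltl; rewrite /cx mxE /= inordK. Qed.

Lemma vec_ext v w : (forall l, (l < n.+1)%N -> cx v l = cx w l) -> v = w.
Proof. by move=> vw; apply/rowP => j; have := vw j (ltn_ord j); rewrite /cx inord_val. Qed.

Lemma ev_delta k : (k < n.+1)%N -> ev k = delta_mx 0 (inord k).
Proof. by move=> ltk; apply/rowP => j; rewrite !mxE eqxx /= -val_eqE /= inordK. Qed.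

Lemma ev_neq k l : (k < n.+1)%N -> k != l -> ev k != ev l.
Proof.
move=> ltk kl; apply: contra_neq (oner_neq0 'F_2) => /(congr1 (cx^~ k)).
by rewrite !cx_ev // eqxx (negbTE kl).
Qed.

Lemma ev_neq0 k : (k < n.+1)%N -> ev k != 0.
Proof.
move=> ltk; apply: contra_neq (oner_neq0 'F_2) => /(congr1 (cx^~ k)).
by rewrite cx_ev // eqxx cx0.
Qed.

Definition Bcoord (u01 u02 u12 : V n.+1) x y : V n.+1 :=
  (cx x 0 * cx y 1 + cx x 1 * cx y 0) *: u01 + (cx x 0 * cx y 2 + cx x 2 * cx y 0) *: u02
  + (cx x 1 * cx y 2 + cx x 2 * cx y 1) *: u12.

Lemma Bcoord_morph (p : V n.+1 -> V n.+1) u01 u02 u12 x y : {morph p : a b / a + b} ->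
  p (Bcoord u01 u02 u12 x y) = Bcoord (p u01) (p u02) (p u12) x y.
Proof. by move=> pD; rewrite /Bcoord !pD !(additiveZ _ _ pD). Qed.

(* The normal forms of [B] for [dim U = 3] and [dim U = 2]: the first three
   coordinates are those of V / W, and the image is spanned by e3, e4, e5, resp. e3, e4. *)
Definition Bstd (d : nat) : V n.+1 -> V n.+1 -> V n.+1 :=
  if d == 3%N then Bcoord (ev 3) (ev 4) (ev 5) else Bcoord 0 (ev 3) (ev 4).

End Coordinates.
Arguments ev : clear implicits.
Arguments Bstd : clear implicits.

Lemma free_coef0 s n (X : seq (V s)) : size X = n -> free X ->
  forall k : 'I_n -> 'F_2, \sum_(i < n) k i *: X`_i = 0 -> forall i, k i = 0.
Proof. by move=> <- /(@freeP _ _ _ (in_tuple X)). Qed.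

Lemma free_perm s (b : seq (V s)) : size b = s -> free b ->
  exists2 p : {perm V s}, {morph p : x y / x + y} & forall i : 'I_s, p (delta_mx 0 i) = b`_i.
Proof.
move=> sz_b free_b; pose psi (x : V s) := \sum_(i < s) x 0 i *: b`_i.
have psiD : {morph psi : x y / x + y}.
  by move=> x y; rewrite /psi -big_split; apply: eq_bigr => i _; rewrite mxE scalerDl.
have psi_inj : injective psi.
  move=> x y psi_xy; have xy0 : x + y = 0.
    apply/rowP => i; rewrite [RHS]mxE.
    apply: (@free_coef0 _ _ _ sz_b free_b (fun j => (x + y) 0 j) _ i).
    by rewrite -/(psi (x + y)) psiD psi_xy addvv.
  by rewrite -(addvK x y) xy0 add0r.
exists (perm psi_inj) => [x y | i]; rewrite !permE //.
rewrite /psi (bigD1 i) //= mxE !eqxx scale1r big1 ?addr0 // => j ji.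
by rewrite mxE (negbTE ji) andbF scale0r.
Qed.

Section Rank3.
Variables (m : nat) (B : V m.+3 -> V m.+3 -> V m.+3).
Hypotheses (nB : nil_alt B) (dimWB : \dim (WB B) = m).
Local Notation VV := (V m.+3).
Local Notation e := (ev m.+2).
Local Notation rad := (is_rad B).
Implicit Types (u v w x y : VV) (F G us : seq VV).

(* [F] spans V modulo the radical; three such vectors induce a basis of V / W. *)
Definition top_basis F := (<<F>> + WB B)%VS = fullv.

Lemma top_basis_exists : exists f0 f1 f2, top_basis [:: f0; f1; f2].
Proof.
have dimC : \dim (WB B)^C = 3%N by rewrite dimv_compl dimV dimWB; lia.
have := vbasisP (WB B)^C; have : size (vbasis (WB B)^C) = 3%N by rewrite size_tuple.
case: (tval _) => [|f0 [|f1 [|f2 []]]] //= _ /andP[/eqP spanC _].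
by exists f0, f1, f2; rewrite /top_basis spanC addvC addv_complf.
Qed.

Lemma top_basis_sub F G : top_basis F -> {subset F <= <<G>>%VS} -> top_basis G.
Proof. by move=> topF FG; apply/eqP; rewrite eqEsubv subvf -topF addvS //; apply/span_subvP. Qed.

Lemma top_basis_dec f0 f1 f2 v : top_basis [:: f0; f1; f2] ->
  exists c0 c1 c2 w, rad w /\ v = c0 *: f0 + c1 *: f1 + c2 *: f2 + w.
Proof.
move=> topF; have := memvf v; rewrite -topF.
move=> /memv_addP[_ /span3P[c0 [c1 [c2 ->]]] [w /(memWB nB) rw ->]].
by exists c0, c1, c2, w.
Qed.

Lemma top_basis_rad f0 f1 f2 c0 c1 c2 : top_basis [:: f0; f1; f2] ->
  rad (c0 *: f0 + c1 *: f1 + c2 *: f2) -> [/\ c0 = 0, c1 = 0 & c2 = 0].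
Proof.
move=> topF /(memWB nB) combW.
have [] := dimv_add_leqif <<[:: f0; f1; f2]>>%VS (WB B).
rewrite topF dimV dimWB => le_sum eq_sum.
have dimF : \dim <<[:: f0; f1; f2]>> = 3%N.
  by have /= := dim_span [:: f0; f1; f2]; lia.
have capF : (<<[:: f0; f1; f2]>> :&: WB B = 0)%VS.
  by apply/eqP; rewrite -subv0 -eq_sum dimF add3n eqxx.
apply: free3; first by apply/eqP; exact: dimF.
by apply/eqP; rewrite -memv0 -capF memv_cap combW memv_comb3.
Qed.

Lemma top_basis_radP f0 f1 f2 v : top_basis [:: f0; f1; f2] ->
  B f0 v = 0 -> B f1 v = 0 -> B f2 v = 0 -> rad v.
Proof.
move=> topF B0v B1v B2v x; have [c0 [c1 [c2 [w [rw ->]]]]] := top_basis_dec x topF.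
by rewrite !(B_addl nB) !(BZl nB) B0v B1v B2v (rad_Bl nB _ rw) !scaler0 !addr0.
Qed.

Lemma UB_top_basis f0 f1 f2 : top_basis [:: f0; f1; f2] ->
  UB B = <<[:: B f0 f1; B f0 f2; B f1 f2]>>%VS.
Proof.
move=> topF; apply/eqP; rewrite eqEsubv; apply/andP; split; apply/span_subvP => u.
  move=> /allpairsP[[x y] [_ _ ->]] /=.
  have [a0 [a1 [a2 [wx [rx ->]]]]] := top_basis_dec x topF.
  have [b0 [b1 [b2 [wy [ry ->]]]]] := top_basis_dec y topF.
  by rewrite (B_addl nB) (rad_Bl nB _ rx) addr0 (B_addr nB) ry addr0 (B_comb3 nB) memv_comb3.
by rewrite !inE => /or3P[] /eqP ->; apply: memUB.
Qed.

Lemma adapted_perm f0 f1 f2 us : top_basis [:: f0; f1; f2] -> free us -> {subset us <= WB B} ->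
  exists p : {perm VV}, [/\ {morph p : x y / x + y},
    [/\ p (e 0) = f0, p (e 1) = f1 & p (e 2) = f2],
    forall k, (k < size us)%N -> p (e k.+3) = us`_k &
    forall k, (3 <= k < m.+3)%N -> rad (p (e k))].
Proof.
move=> topF free_us usW; set X := <<us>>%VS.
have XW : (X <= WB B)%VS by apply/span_subvP.
set ws := tval (vbasis (WB B :\: X)).
have wsW : {subset ws <= WB B}.
  move=> w wws; apply: (subvP (diffvSl _ X)).
  by rewrite -(span_basis (vbasisP (WB B :\: X))) memv_span.
have sz_usws : (size us + size ws = m)%N.
  rewrite size_tuple -[RHS]dimWB -(dimv_cap_compl (WB B) X) (capv_idPr XW).
  by move/eqP: free_us => ->.
set b := [:: f0; f1; f2] ++ us ++ ws.
have sz_b : size b = m.+3 by rewrite /b /= size_cat sz_usws.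
have span_b : (<<b>> = fullv)%VS.
  rewrite /b span_cat span_cat (span_basis (vbasisP _)) -topF -/X; congr (_ + _)%VS.
  by rewrite addvC addv_diff; apply/addv_idPl.
have free_b : free b by rewrite /free span_b dimV sz_b.
have [p pD pb] := free_perm sz_b free_b.
have pe k : (k < m.+3)%N -> p (e k) = b`_k by move=> ltk; rewrite ev_delta // pb inordK.
exists p; split => //; first by rewrite !pe.
  by move=> k ltk; rewrite pe /= ?nth_cat ?ltk //; lia.
move=> k /andP[le3k ltk]; apply/(memWB nB); rewrite pe //.
have [j kE] : exists j, k = j.+3 by exists (k - 3)%N; lia.
subst k.
have : (us ++ ws)`_j \in us ++ ws by apply: mem_nth; rewrite size_cat sz_usws; lia.
by rewrite mem_cat => /orP[/usW | /wsW].
Qed.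

Lemma B_perm_Bcoord (p : VV -> VV) : {morph p : x y / x + y} ->
  (forall k, (3 <= k < m.+3)%N -> rad (p (e k))) ->
  forall x y, B (p x) (p y) =
    Bcoord (B (p (e 0)) (p (e 1))) (B (p (e 0)) (p (e 2))) (B (p (e 1)) (p (e 2))) x y.
Proof.
move=> pD prad.
have p_rad y : cx y 0 = 0 -> cx y 1 = 0 -> cx y 2 = 0 -> rad (p y).
  move=> y0 y1 y2; apply/(memWB nB).
  rewrite (row_sum_delta y) (additive_sum _ _ _ pD) memv_suml // => i _.
  rewrite (additiveZ _ _ pD); case: (ltnP i 3) => [lti3 | le3i].
    suff -> : y 0 i = 0 by rewrite scale0r mem0v.
    by rewrite -[i]inord_val; case: (val i) lti3 => [|[|[|]]].
  by rewrite memvZ // -[i]inord_val -ev_delta //; apply/(memWB nB)/prad; rewrite le3i /=.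
have pE x : exists2 r, rad r &
    p x = cx x 0 *: p (e 0) + cx x 1 *: p (e 1) + cx x 2 *: p (e 2) + r.
  set c := cx x 0 *: e 0 + cx x 1 *: e 1 + cx x 2 *: e 2.
  exists (p (x + c)).
    by apply: p_rad; rewrite /c !cxD !cxZ !cx_ev //=; f2.
  by rewrite pD /c !pD !(additiveZ _ _ pD) addrCA addvv addr0.
move=> x y; have [rx rxr ->] := pE x; have [ry ryr ->] := pE y.
by rewrite (B_addl nB) (rad_Bl nB _ rxr) addr0 (B_addr nB) ryr addr0 (B_comb3 nB).
Qed.

(* A dependency among the [B fi fj] is a nonzero vector of the alternating square
   of V / W, which a change of top basis moves to [f0 /\ f1]. *)
Lemma normalize_top_basis f0 f1 f2 : top_basis [:: f0; f1; f2] ->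
  ~~ free [:: B f0 f1; B f0 f2; B f1 f2] ->
  exists g0 g1 g2, top_basis [:: g0; g1; g2] /\ B g0 g1 = 0.
Proof.
move=> topF; rewrite free_cons free_cons seq1_free !negb_and !negbK => /or3P[].
- rewrite span_cons span_seq1 => /memv_addP[_ /vlineP[a ->] [_ /vlineP[b ->] Bf01]].
  exists (f0 + b *: f2), (f1 + a *: f2), f2; split.
    have [G0 G1 G2] := memv_span3 (f0 + b *: f2) (f1 + a *: f2) f2.
    apply: top_basis_sub topF _ => f; rewrite !inE => /or3P[] /eqP -> //.
      by rewrite -(rpredDr f0 (memvZ b G2)).
    by rewrite -(rpredDr f1 (memvZ a G2)).
  rewrite !(B_addl nB) !(B_addr nB) !(BZl nB) !(BZr nB) (Bxx nB) Bf01 (BC nB f2 f1).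
  move: (B f0 f2) (B f1 f2) => u02 u12.
  by f2_vec.
- rewrite span_seq1 => /vlineP[c Bf02].
  exists (f0 + c *: f1), f2, f1; split; last by rewrite (B_addl nB) (BZl nB) Bf02 addvv.
  have [G0 G1 G2] := memv_span3 (f0 + c *: f1) f2 f1.
  apply: top_basis_sub topF _ => f; rewrite !inE => /or3P[] /eqP -> //.
  by rewrite -(rpredDr f0 (memvZ c G2)).
- move=> /eqP Bf12; exists f1, f2, f0; split => //.
  have [G0 G1 G2] := memv_span3 f1 f2 f0.
  by apply: top_basis_sub topF _ => f; rewrite !inE => /or3P[] /eqP ->.
Qed.

(* If [B g0 g2] and [B g1 g2] were dependent, some nonzero combination of g0, g1
   would be radical. *)
Lemma free_B_pair g0 g1 g2 : top_basis [:: g0; g1; g2] -> B g0 g1 = 0 ->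
  free [:: B g0 g2; B g1 g2].
Proof.
move=> topG Bg01; rewrite free_cons seq1_free span_seq1; apply/andP; split.
  apply/vlineP => -[c Bg02].
  have rv : rad (1 *: g0 + c *: g1 + 0 *: g2).
    rewrite scale0r addr0 scale1r; apply: top_basis_radP topG _ _ _.
    - by rewrite (B_addr nB) (BZr nB) (Bxx nB) Bg01 scaler0 addr0.
    - by rewrite (B_addr nB) (BZr nB) (Bxx nB) (BC nB g1 g0) Bg01 scaler0 addr0.
    - by rewrite (B_addr nB) (BZr nB) (BC nB g2 g0) (BC nB g2 g1) Bg02 addvv.
  by have [/eqP] := top_basis_rad topG rv; rewrite oner_eq0.
apply/eqP => Bg12.
have rv : rad (0 *: g0 + 1 *: g1 + 0 *: g2).
  rewrite !scale0r add0r addr0 scale1r; apply: top_basis_radP topG _ _ _.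
  - exact: Bg01.
  - exact: (Bxx nB).
  - by rewrite (BC nB) Bg12.
by have [_ /eqP] := top_basis_rad topG rv; rewrite oner_eq0.
Qed.

Lemma std_model : exists p : {perm VV}, [/\ \dim (UB B) = 2%N \/ \dim (UB B) = 3%N,
  {morph p : x y / x + y} & forall x y, B (p x) (p y) = p (Bstd m.+2 (\dim (UB B)) x y)].
Proof.
have [f0 [f1 [f2 topF]]] := top_basis_exists.
have BW g g' : B g g' \in WB B by apply/(memWB nB)/is_radB.
case free_U: (free [:: B f0 f1; B f0 f2; B f1 f2]).
  have dimU : \dim (UB B) = 3%N by rewrite (UB_top_basis topF); apply/eqP.
  have [|p [pD [p0 p1 p2] pus prad]] := adapted_perm topF free_U.
    by move=> u; rewrite !inE => /or3P[] /eqP ->; apply: BW.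
  exists p; split; [by right | done | move=> x y].
  rewrite dimU /Bstd /= (Bcoord_morph _ _ _ _ _ pD) (B_perm_Bcoord pD prad) p0 p1 p2.
  by rewrite (pus 0%N) // (pus 1%N) // (pus 2%N).
have [g0 [g1 [g2 [topG Bg01]]]] := normalize_top_basis topF (negbT free_U).
have free_G := free_B_pair topG Bg01.
have dimU : \dim (UB B) = 2%N.
  rewrite (UB_top_basis topG) Bg01 span_cons; apply/eqP.
  by rewrite (addv_idPr _) ?free_G // -memvE mem0v.
have [|p [pD [p0 p1 p2] pus prad]] := adapted_perm topG free_G.
  by move=> u; rewrite !inE => /orP[] /eqP ->; apply: BW.
exists p; split; [by left | done | move=> x y].
rewrite dimU /Bstd /= (Bcoord_morph _ _ _ _ _ pD) (B_perm_Bcoord pD prad) p0 p1 p2.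
by rewrite Bg01 (additive0 pD) (pus 0%N) // (pus 1%N).
Qed.

End Rank3.

Lemma HB_of s (B : V s -> V s -> V s) (f : V s -> V s) : involutive f ->
  {morph f : x y / x + y} -> (forall x y, f (B x y) = B (f x) (f y)) ->
  exists2 h, h \in HB B & h =1 f.
Proof.
move=> fK fD fB; exists (perm (can_inj fK)); last by move=> x; rewrite permE.
by apply/HBP; split=> [x y | x y]; rewrite !permE.
Qed.

Section Std3.
Variable m : nat.
Hypothesis le3m : (3 <= m)%N.
Local Notation VV := (V m.+3).
Local Notation e := (ev m.+2).
Local Notation B3 := (Bstd m.+2 3).
Implicit Types (x y v w : VV).

Let lt3 : (3 < m.+3)%N. Proof. by lia. Qed.
Let lt4 : (4 < m.+3)%N. Proof. by lia. Qed.
Let lt5 : (5 < m.+3)%N. Proof. by lia. Qed.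

Fact std_key : unit. Proof. by []. Qed.
Definition transv j k x := locked_with std_key (x + cx x j *: e k).
(* Lifts of the maps e0 |-> e0 + e1, (e0 e1) and (e1 e2) of the top coordinates:
   the correction on e3, e4, e5 is the induced action on the image of [B3]. *)
Definition lift01 x := locked_with std_key (x + cx x 0 *: e 1 + cx x 4 *: e 5).
Definition swap01 x := locked_with std_key
  (x + (cx x 0 + cx x 1) *: (e 0 + e 1) + (cx x 4 + cx x 5) *: (e 4 + e 5)).
Definition swap12 x := locked_with std_key
  (x + (cx x 1 + cx x 2) *: (e 1 + e 2) + (cx x 3 + cx x 4) *: (e 3 + e 4)).

Lemma transvE j k x : transv j k x = x + cx x j *: e k.
Proof. by rewrite /transv unlock. Qed.

Lemma lift01E x : lift01 x = x + cx x 0 *: e 1 + cx x 4 *: e 5.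
Proof. by rewrite /lift01 unlock. Qed.

Lemma cx_transv j k x l : cx (transv j k x) l = cx x l + cx x j * cx (e k) l.
Proof. by rewrite /transv unlock cxD cxZ. Qed.

Lemma cx_lift01 x l : cx (lift01 x) l = cx x l + cx x 0 * cx (e 1) l + cx x 4 * cx (e 5) l.
Proof. by rewrite /lift01 unlock !cxD !cxZ. Qed.

Lemma cx_swap01 x l : cx (swap01 x) l = cx x l + (cx x 0 + cx x 1) * (cx (e 0) l + cx (e 1) l)
  + (cx x 4 + cx x 5) * (cx (e 4) l + cx (e 5) l).
Proof. by rewrite /swap01 unlock !cxD !cxZ !cxD. Qed.

Lemma cx_swap12 x l : cx (swap12 x) l = cx x l + (cx x 1 + cx x 2) * (cx (e 1) l + cx (e 2) l)
  + (cx x 3 + cx x 4) * (cx (e 3) l + cx (e 4) l).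
Proof. by rewrite /swap12 unlock !cxD !cxZ !cxD. Qed.

Lemma cx_B3 x y l : cx (B3 x y) l = (cx x 0 * cx y 1 + cx x 1 * cx y 0) * cx (e 3) l
  + (cx x 0 * cx y 2 + cx x 2 * cx y 0) * cx (e 4) l
  + (cx x 1 * cx y 2 + cx x 2 * cx y 1) * cx (e 5) l.
Proof. by rewrite /Bstd /Bcoord /= !cxD !cxZ. Qed.

Lemma HB3_transv j k : (j < m.+3)%N -> j \notin [:: 3; 4; 5]%N -> k \in [:: 3; 4; 5]%N ->
  exists2 h, h \in HB B3 & h =1 transv j k.
Proof.
move=> ltj j345 k345; have jk : (j == k) = false by apply: contraNF j345 => /eqP ->.
have [k0 k1 k2] : [/\ (0 == k) = false, (1 == k) = false & (2 == k) = false].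
  by move: k345; rewrite !inE => /or3P[] /eqP ->.
move: j345; rewrite !inE !negb_or => /and3P[/negbTE j3 /negbTE j4 /negbTE j5].
apply: HB_of => [x | x y | x y]; apply: vec_ext => l ltl.
all: by rewrite ?cx_B3 ?cxD !cx_transv ?cx_B3 ?cxD !cx_ev //= ?jk ?k0 ?k1 ?k2 ?j3 ?j4 ?j5 /=; f2.
Qed.

Lemma HB3_lift01 : exists2 h, h \in HB B3 & h =1 lift01.
Proof.
apply: HB_of => [x | x y | x y]; apply: vec_ext => l ltl.
all: by rewrite ?cx_B3 ?cxD !cx_lift01 ?cx_B3 ?cxD !cx_ev //=; f2.
Qed.

Lemma HB3_swap01 : exists2 h, h \in HB B3 & h =1 swap01.
Proof.
apply: HB_of => [x | x y | x y]; apply: vec_ext => l ltl.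
all: by rewrite ?cx_B3 ?cxD !cx_swap01 ?cx_B3 ?cxD !cx_ev //=; f2.
Qed.

Lemma HB3_swap12 : exists2 h, h \in HB B3 & h =1 swap12.
Proof.
apply: HB_of => [x | x y | x y]; apply: vec_ext => l ltl.
all: by rewrite ?cx_B3 ?cxD !cx_swap12 ?cx_B3 ?cxD !cx_ev //=; f2.
Qed.

Section InvariantPlane.
Variables a b : VV.
Hypothesis planeP : forall h z, h \in HB B3 -> in_plane a b z -> in_plane a b (h z).
Local Notation P := (in_plane a b).

Lemma plane_not_e345 : ~ [/\ P (e 3), P (e 4) & P (e 5)].
Proof.
case=> P3 P4 P5; have := in_plane3 P3 P4 P5 (ev_neq0 lt3) (ev_neq0 lt4) (ev_neq0 lt5).
move=> /(_ (@ev_neq _ 3 4 lt3 isT) (@ev_neq _ 3 5 lt3 isT) (@ev_neq _ 4 5 lt4 isT)).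
move=> /(congr1 (fun v => cx v 5)).
by rewrite cxD !cx_ev.
Qed.

Lemma plane_add h v w : h \in HB B3 -> P v -> h v = v + w -> P w.
Proof.
move=> hH Pv hv; have := in_plane_add Pv (planeP hH Pv).
by rewrite hv addrA addvv add0r.
Qed.

Lemma plane_coord_out v j : P v -> (j < m.+3)%N -> j \notin [:: 3; 4; 5]%N -> cx v j = 0.
Proof.
move=> Pv ltj j345; case: (F2P (cx v j)) => // vj1; apply: False_ind; apply: plane_not_e345.
have P_ek k : k \in [:: 3; 4; 5]%N -> P (e k).
  move=> k345; have [h hH hE] := HB3_transv ltj j345 k345.
  by apply: plane_add hH Pv _; rewrite hE transvE vj1 scale1r.
by split; apply: P_ek; rewrite !inE eqxx ?orbT.
Qed.

Lemma plane_coord4 v : P v -> cx v 4 = 0.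
Proof.
move=> Pv; case: (F2P (cx v 4)) => // v4; apply: False_ind; apply: plane_not_e345.
have v0 : cx v 0 = 0 by apply: plane_coord_out.
have [h1 h1H h1E] := HB3_lift01.
have P5 : P (e 5).
  by apply: plane_add h1H Pv _; rewrite h1E lift01E v0 v4 scale0r addr0 scale1r.
have [h2 h2H h2E] := HB3_swap01.
have P4 : P (e 4).
  have -> : e 4 = h2 (e 5).
    by rewrite h2E; apply: vec_ext => l ltl; rewrite cx_swap01 !cx_ev //=; f2.
  exact: planeP.
have [h3 h3H h3E] := HB3_swap12.
have P3 : P (e 3).
  have -> : e 3 = h3 (e 4).
    by rewrite h3E; apply: vec_ext => l ltl; rewrite cx_swap12 !cx_ev //=; f2.
  exact: planeP.
by [].
Qed.

Lemma plane_trivial v : P v -> v = 0.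
Proof.
move=> Pv; have v4 := plane_coord4 Pv.
have [v1 v2] : cx v 1 = 0 /\ cx v 2 = 0 by split; apply: plane_coord_out.
have v0 : cx v 0 = 0 by apply: plane_coord_out.
have [h2 h2H h2E] := HB3_swap01; have [h3 h3H h3E] := HB3_swap12.
have v5 : cx v 5 = 0.
  have := plane_coord4 (planeP h2H Pv).
  by rewrite h2E cx_swap01 !cx_ev //= v0 v1 v4 => v5; rewrite -[RHS]v5; f2.
have v3 : cx v 3 = 0.
  have := plane_coord4 (planeP h3H Pv).
  by rewrite h3E cx_swap12 !cx_ev //= v1 v2 v4 => v3; rewrite -[RHS]v3; f2.
apply: vec_ext => l ltl; rewrite cx0.
have [l345 | ?] := boolP (l \in [:: 3; 4; 5]%N); last exact: plane_coord_out.
by move: l345; rewrite !inE => /or3P[] /eqP ->.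
Qed.

End InvariantPlane.

Lemma no_stab_plane_std3 : ~ stab_plane (HB B3).
Proof.
case=> a [b [a0 _ _ Hab]].
have planeP h z : h \in HB B3 -> in_plane a b z -> in_plane a b (h z).
  move=> hH; have [Pa Pb] := Hab h hH; have /HBP[hD _] := hH.
  case=> [->|[->|[->|->]]] //; first by left; apply: additive0.
  by rewrite hD; apply: in_plane_add.
by move/eqP: a0; apply; apply: (plane_trivial planeP); right; left.
Qed.

End Std3.

Lemma HBJ s (B B' : V s -> V s -> V s) (p h : {perm V s}) : {morph p : x y / x + y} ->
  (forall x y, B (p x) (p y) = p (B' x y)) -> h \in HB B' -> (h ^ p)%g \in HB B.
Proof.
move=> pD pB /HBP[hD hB]; apply/HBP.
have hpE z : (h ^ p)%g z = p (h ((p^-1)%g z)) by rewrite conjgE !permM.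
split=> x y; first by rewrite !hpE (additive_perm_inv pD) hD pD.
by rewrite -(permKV p x) -(permKV p y) pB !hpE !permK hB pB.
Qed.

Lemma HB_conj s (B B' : V s -> V s -> V s) (p : {perm V s}) : {morph p : x y / x + y} ->
  (forall x y, B (p x) (p y) = p (B' x y)) -> HB B = (HB B' :^ p)%g.
Proof.
move=> pD pB; apply/setP => h; rewrite mem_conjg; apply/idP/idP => [hB | /(HBJ pD pB)].
  apply: HBJ hB; first exact: additive_perm_inv.
  by move=> x y; apply: (@perm_inj _ p); rewrite permKV -pB !permKV.
by rewrite -conjgM mulVg conjg1.
Qed.

Lemma stab_plane_HBE m (B : V m.+3 -> V m.+3 -> V m.+3) : nil_alt B -> \dim (WB B) = m ->
  stab_plane (HB B) <-> \dim (UB B) = 2%N.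
Proof.
move=> nB dimWB; split=> [stabH | ]; last exact: stab_plane_UB2.
have [p [[//|dimU] pD pB]] := std_model nB dimWB; apply: False_ind.
have le3m : (3 <= m)%N by have := dimvS (UB_sub_WB nB); rewrite dimU dimWB.
have HBE : HB B = (HB (Bstd m.+2 3) :^ p)%g by apply: HB_conj pD _ => x y; rewrite pB dimU.
by apply: (no_stab_plane_std3 le3m); rewrite -(stab_planeJE _ pD) -HBE.
Qed.

Lemma HB_conj_dimUB m (B1 B2 : V m.+3 -> V m.+3 -> V m.+3) : nil_alt B1 -> nil_alt B2 ->
  \dim (WB B1) = m -> \dim (WB B2) = m ->
  (exists2 g : {perm V m.+3}, g \in GLp m.+3 & (HB B1 :^ g^-1)%g = HB B2)
  <-> \dim (UB B1) = \dim (UB B2).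
Proof.
move=> nB1 nB2 dimW1 dimW2.
have [p1 [dimU1 p1D p1B]] := std_model nB1 dimW1.
have [p2 [dimU2 p2D p2B]] := std_model nB2 dimW2.
split=> [[g gGL HJ] | eqU].
  have : \dim (UB B1) = 2%N <-> \dim (UB B2) = 2%N.
    rewrite -(stab_plane_HBE nB1 dimW1) -(stab_plane_HBE nB2 dimW2) -HJ stab_planeJE //.
    exact/additive_perm_inv/(GLpE g).
  by case: dimU1 dimU2 => -> [] -> // [U12 U21]; [case: (U12 erefl) | case: (U21 erefl)].
exists (p2^-1 * p1)%g; first by apply/GLpE/additive_permM => //; apply: additive_perm_inv.
rewrite (HB_conj p1D p1B) (HB_conj p2D p2B) eqU.
by rewrite -conjsgM invMg invgK mulgA mulgV mul1g.
Qed.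

Theorem corollary1 (s : nat) (T1 T2 : {group {perm V s}}) :
  alt_op T1 -> alt_op T2 ->
  (\dim (Wsp T1) + 3 = s)%N -> (\dim (Wsp T2) + 3 = s)%N ->
  ((exists2 g : {perm V s}, g \in GLp s & (Hcirc T1 :^ g^-1)%g = Hcirc T2)
   <-> \dim (Usp T1) = \dim (Usp T2)).
Proof.
move=> altT1 altT2; rewrite !Wsp_dotp // !Hcirc_dotp //.
case: s T1 T2 altT1 altT2 => [|[|[|m]]] T1 T2 altT1 altT2 dimW1 dimW2; try lia.
by apply: HB_conj_dimUB; [exact: dotp_nil_alt | exact: dotp_nil_alt | lia | lia].
Qed.
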